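(* For all integers $k \geq 2$, $\nu_2(P_kQ_k - k) \geq 2$, i.e., $4$ divides $P_kQ_k - k$.
   Context: The Pell sequence $(P_n)_{n\ge0}$ is defined by $P_0=0$, $P_1=1$, $P_n = 2P_{n-1}+P_{n-2}$. The associated Pell sequence $(Q_n)_{n\ge0}$ is defined by $Q_0=1$, $Q_1=1$, $Q_n=2Q_{n-1}+Q_{n-2}$. For a prime $p$ and a nonzero integer $n$, $\nu_p(n)$ denotes the $p$-adic valuation of $n$, the largest nonnegative integer $j$ such that $p^j$ divides $n$ (with $\nu_p(0)=\infty$). *)

From mathcomp Require Import all_boot all_order all_algebra.
Set Implicit Arguments. Unset Strict Implicit. Unset Printing Implicit Defensive.

Fixpoint pell (n : nat) : nat :=
  match n with
  | 0 => 0
  | 1 => 1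
  | (m.+1 as n1).+1 => 2 * pell n1 + pell m
  end.

Fixpoint qpell (n : nat) : nat :=
  match n with
  | 0 => 1
  | 1 => 1
  | (m.+1 as n1).+1 => 2 * qpell n1 + qpell m
  end.

From mathcomp Require Import all_boot all_order all_algebra.
From mathcomp Require Import zify.

(* Every solution of a(n+2) = 2 a(n+1) + a(n) satisfies
   a(n+4) = 12 a(n+1) + 5 a(n), so it is 4-periodic modulo 4.  Hence
   P_k Q_k = P_r Q_r (mod 4) with r = k mod 4, and P_r Q_r is 0, 1, 6, 35
   for r = 0, 1, 2, 3.  The congruence thus holds for every k. *)

Section PellRecurrence.

Variable a : nat -> nat.
Hypothesis a_rec : forall n, a n.+2 = 2 * a n.+1 + a n.

Lemma pell_rec_S4 n : a n.+4 = 12 * a n.+1 + 5 * a n.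
Proof. rewrite !a_rec; lia. Qed.

Lemma pell_rec_add4_mod4 n : a (n + 4) = a n %[mod 4].
Proof. rewrite addn4 pell_rec_S4; lia. Qed.

Lemma pell_rec_modn4 n : a n = a (n %% 4) %[mod 4].
Proof.
rewrite {1}(divn_eq n 4); elim: (n %/ 4) => [|q IHq]; first by rewrite mul0n.
have -> : q.+1 * 4 + n %% 4 = q * 4 + n %% 4 + 4 by lia.
by rewrite pell_rec_add4_mod4.
Qed.

End PellRecurrence.

Lemma pellSS n : pell n.+2 = 2 * pell n.+1 + pell n.
Proof. by []. Qed.

Lemma qpellSS n : qpell n.+2 = 2 * qpell n.+1 + qpell n.
Proof. by []. Qed.

Lemma pell_qpell_mod4 k : pell k * qpell k = k %[mod 4].
Proof.
rewrite -modnMm (pell_rec_modn4 _ pellSS) (pell_rec_modn4 _ qpellSS) modnMm.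
rewrite -[RHS]modn_mod; move: (ltn_pmod k (isT : 0 < 4)).
by case: (k %% 4) => [|[|[|[|r]]]].
Qed.

Theorem lemma27 (k : nat) : (2 <= k)%N ->
  (4%:Z %| ((pell k * qpell k)%:Z - k%:Z)%R)%Z.
Proof. by move=> _; rewrite -eqz_mod_dvd !modz_nat pell_qpell_mod4. Qed.
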